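(* Let $p$ be a prime, $e\ge1$, and $G$ a finite abelian group of order $p^e$. Let $\psi^p\colon\mathbf{Z}[G]\to\mathbf{Z}[G]$ be the ring homomorphism with $\psi^p(g)=g^p$, and let $h(t)=\frac{1}{1-t}\left(p-\frac{1-t^p}{1-t}\right)$, a polynomial of degree $p-2$. Then $$\psi^p(b_1)=b_1+\sum_{\tau\neq1,\ \psi\tau=1}h(y_\tau)\,b_\tau,$$ where the sum runs over one representative $\tau$ of each equivalence class of nontrivial representations with $\psi\tau=1$.
   Context: A representation is a group homomorphism $\tau\colon G\to\mathbf{C}^*$; two representations are equivalent if they have the same kernel. $\psi\tau$ is the representation $x\mapsto\tau(x^p)$, and $1$ denotes the trivial representation. Write $\omega=\exp(2\pi i/p)$. For $\tau$ nontrivial, $b_\tau=\sum_{x\in G,\ \tau(x)=1}x-\sum_{\xi\in G,\ \tau(\xi)=\omega}\xi$ and $y_\tau\in G$ is a fixed element with $\tau(y_\tau)=\omega$; $b_1=\sum_{x\in G}x$. *)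

From HB Require Import structures.
From mathcomp Require Import all_boot all_order all_algebra all_fingroup all_field.
Set Implicit Arguments. Unset Strict Implicit. Unset Printing Implicit Defensive.
Import GRing.Theory Num.Theory.
Local Open Scope ring_scope.

(* Z[G] is modelled as integer-valued functions on gT (supported on G). *)
Section GroupRing.
Variables (gT : finGroupType) (G : {group gT}).

Definition gr_delta (y : gT) : {ffun gT -> int} := [ffun x => ((x == y) : nat)%:Z].

Definition gr_mul (f g : {ffun gT -> int}) : {ffun gT -> int} :=
  [ffun z => \sum_(x in G) f x * g (x^-1 * z)%g].

Definition gr_psi (p : nat) (f : {ffun gT -> int}) : {ffun gT -> int} :=
  [ffun z => \sum_(x in G | (x ^+ p)%g == z) f x].

Definition gr_peval (q : {poly int}) (y : gT) : {ffun gT -> int} :=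
  [ffun x => \sum_(k < size q) q`_k * gr_delta (y ^+ k)%g x].

(* representations G -> C^* (C taken as algebraic complex numbers) *)
Definition is_rep (tau : gT -> algC) : Prop :=
  (forall x, x \in G -> tau x != 0) /\
  (forall x y, x \in G -> y \in G -> tau (x * y)%g = tau x * tau y).

Definition rep_ker (tau : gT -> algC) : {set gT} := [set x in G | tau x == 1].

Definition rep_trivial (tau : gT -> algC) : Prop := forall x, x \in G -> tau x = 1.

Definition psi_rep_trivial (p : nat) (tau : gT -> algC) : Prop :=
  forall x, x \in G -> tau (x ^+ p)%g = 1.

(* omega = exp(2 pi i / p): p.-root (-1) is exp(i pi / p) *)
Definition omega (p : nat) : algC := (p.-root (-1)) ^+ 2.

Definition b1 : {ffun gT -> int} := [ffun x => ((x \in G) : nat)%:Z].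

Definition b_rep (p : nat) (tau : gT -> algC) : {ffun gT -> int} :=
  [ffun x => (((x \in G) && (tau x == 1)) : nat)%:Z
            - (((x \in G) && (tau x == omega p)) : nat)%:Z].

End GroupRing.

Definition hpoly (p : nat) : {poly int} :=
  ((p%:Z)%:P - \sum_(j < p) 'X^j) %/ (1 - 'X).

(* Compare both sides at z in G.  For the abelian group G the second orthogonality
   relation counts the solutions of x^p = z as the sum of chi(z) over the irreducible
   characters chi with chi(x^p) = 1.  Besides the trivial character these are exactly the
   powers tau^a, 0 < a < p, of the chosen representatives tau: a character with the same
   kernel as tau is a power of tau, because G is generated by ker tau and y_tau.  The
   geometric sum over a turns this count into 1 + sum_tau (p [tau z = 1] - 1).  On the
   other side h = sum_(k < p-1) (p-1-k) t^k and b_tau(y_tau^-k z) = [m = k] - [m = k+1]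
   when tau z = omega^m, so h(y_tau) b_tau telescopes to the same p [tau z = 1] - 1. *)

From HB Require Import structures.
From mathcomp Require Import all_boot all_order all_algebra all_fingroup all_field.
From mathcomp Require Import all_character.
From mathcomp Require Import ring zify.
Import GRing.Theory Num.Theory.

Set Implicit Arguments.
Unset Strict Implicit.
Unset Printing Implicit Defensive.

Local Open Scope ring_scope.

(* The order of omega divides p; omega = r^2 = 1 with r^p = -1 would force r = -1,
   which is not the principal root chosen by p.-root. *)
Lemma omega_prim_root p : prime p -> p.-primitive_root (omega p).
Proof.
move=> p_pr; pose r : algC := p.-root (-1).
have rp : r ^+ p = -1 by rewrite /r rootCK ?prime_gt0.
have wp : omega p ^+ p = 1 by rewrite /omega -/r exprAC rp sqrrN expr1n.
have [m m_prim m_dvd] := prim_order_exists (prime_gt0 p_pr) wp.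
have [m1 | m_neq1] := eqVneq m 1%N; last first.
  by move/(prime_nt_dvdP p_pr m_neq1): m_dvd m_prim => ->.
move: m_prim; rewrite m1 => /prim_expr_order; rewrite expr1 /omega -/r => r2.
have : (r - 1) * (r + 1) = 0 by rewrite mulrBl !mulrDr !mulr1 mul1r -expr2 r2; ring.
move/eqP; rewrite mulf_eq0 subr_eq0 addr_eq0 => /orP[/eqP r1 | /eqP rN1].
  by move: rp; rewrite r1 expr1n => /eqP; rewrite -subr_eq0 opprK (eqr_nat _ 2 0).
have : (r < 0) = false by apply: rootC_lt0; exact: prime_gt1.
by rewrite rN1 ltrN10.
Qed.

Lemma sum_nat_indicator (R : pzRingType) N (F : nat -> R) (m : nat) :
  \sum_(k < N) F k * (m == k)%:R = (m < N)%N%:R * F m.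
Proof.
elim: N => [|N IH]; first by rewrite big_ord0 ltn0 mul0r.
rewrite big_ord_recr /= IH ltnS.
by case: (ltngtP m N) => [||->]; rewrite ?mulr0 ?addr0 ?mul0r ?add0r ?mul1r ?mulr1.
Qed.

Lemma sum_unique_pred (V : nmodType) (I : finType) (P : pred I) (F : I -> V) i0 :
  P i0 -> (forall i, P i -> i = i0) -> \sum_(i | P i) F i = F i0.
Proof.
by move=> Pi0 Pu; rewrite (bigD1 i0) //= big1 ?addr0 // => i /andP[/Pu -> /eqP].
Qed.

Lemma sum_rel_bij (V : nmodType) (I J : finType) (P : pred I) (Q : pred J)
    (r : I -> J -> bool) (F : I -> V) (E : J -> V) :
  (forall i j, r i j -> [/\ P i, Q j & F i = E j]) ->
  (forall i, P i -> exists j, r i j /\ forall j', r i j' -> j' = j) ->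
  (forall j, Q j -> exists i, r i j /\ forall i', r i' j -> i' = i) ->
  \sum_(i | P i) F i = \sum_(j | Q j) E j.
Proof.
move=> rPQ ex_j ex_i.
rewrite (eq_bigr (fun i => \sum_(j | r i j) E j)); last first.
  move=> i /ex_j[j [rij uj]]; rewrite (sum_unique_pred _ rij uj).
  by have [_ _ ->] := rPQ _ _ rij.
rewrite (exchange_big_dep Q) /=; last by move=> i j _ /rPQ[].
apply: eq_bigr => j /ex_i[i [rij ui]].
have [Pi _ _] := rPQ _ _ rij.
apply: (@sum_unique_pred _ _ (fun k => P k && r k j) _ i) => [|k /andP[_ /ui] //].
by apply/andP.
Qed.

Lemma sum_nonzero_expr (F : idomainType) p (t : F) : (0 < p)%N -> t ^+ p = 1 ->
  \sum_(a < p | a != 0 :> nat) t ^+ a = p%:R * (t == 1)%:R - 1.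
Proof.
move=> p_gt0 tp.
have -> : \sum_(a < p | a != 0 :> nat) t ^+ a = \sum_(a < p) t ^+ a - 1.
  by rewrite [in RHS](bigD1 (Ordinal p_gt0)) //= expr0 addrC addrK.
congr (_ - 1).
have [-> | t1] := eqVneq t 1.
  by rewrite (eq_bigr (fun=> 1)) ?sumr_const ?card_ord ?mulr1 // => a _; rewrite expr1n.
rewrite mulr0; apply/eqP; move: (subrX1 t p); rewrite tp subrr => /esym/eqP.
by rewrite mulf_eq0 subr_eq0 (negbTE t1).
Qed.

Lemma hpolyE p : (1 < p)%N -> hpoly p = \poly_(k < p.-1) (p.-1 - k)%N%:Z.
Proof.
move=> p_gt1; rewrite /hpoly.
have -> : (p%:Z)%:P - \sum_(j < p) 'X^j = \poly_(k < p.-1) (p.-1 - k)%N%:Z * (1 - 'X).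
  apply/polyP => k; rewrite coefB coefC coef_sum.
  under eq_bigr do rewrite coefXn -[_%:R]mul1r.
  rewrite (sum_nat_indicator _ (fun=> 1)) mulr1 mulrBr mulr1 coefB coefMX !coef_poly.
  case: k => [|k] /=; first by case: p p_gt1 => [|[|q]] //= _; rewrite subn0; lia.
  case: (ltnP k.+1 p.-1); case: (ltnP k p.-1); case: (ltnP k.+1 p); lia.
rewrite Pdiv.IdomainUnit.mulpK // -opprB lead_coefN lead_coefXsubC.
by rewrite unitrN unitr1.
Qed.

Section GroupRing.
Variables (gT : finGroupType) (G : {group gT}).

Lemma gr_psi_b1E k z : gr_psi G k (b1 G) z = \sum_(x in G | (x ^+ k)%g == z) 1.
Proof. by rewrite ffunE; apply: eq_bigr => x /andP[xG _]; rewrite ffunE xG. Qed.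

Lemma gr_mul_pevalE (q : {poly int}) u (g : {ffun gT -> int}) z : u \in G ->
  gr_mul G (gr_peval q u) g z = \sum_(k < size q) q`_k * g ((u ^+ k)^-1 * z)%g.
Proof.
move=> uG; rewrite ffunE; under eq_bigr do rewrite ffunE mulr_suml.
rewrite exchange_big; apply: eq_bigr => k _ /=.
rewrite (bigD1 (u ^+ k)%g) ?groupX //= big1 => [|x /andP[_ /negbTE x_neq]].
  by rewrite ffunE eqxx mulr1 addr0.
by rewrite ffunE x_neq mulr0 mul0r.
Qed.

Lemma gr_mul_out (h g : {ffun gT -> int}) z :
  {in [predC G], g =1 (fun=> 0)} -> z \notin G -> gr_mul G h g z = 0.
Proof.
move=> g0 zGn; rewrite ffunE big1 // => x xG; rewrite g0 ?mulr0 //.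
by rewrite inE groupMl ?groupV.
Qed.

End GroupRing.

Section Representations.
Variables (gT : finGroupType) (G : {group gT}).
Implicit Types (f g : gT -> algC) (x : gT).

Lemma rep1 f : is_rep G f -> f 1%g = 1.
Proof.
case=> f_neq0 fM; apply: (mulfI (f_neq0 _ (group1 G))).
by rewrite -fM ?group1 // mulg1 mulr1.
Qed.

Lemma repX f x k : is_rep G f -> x \in G -> f (x ^+ k)%g = f x ^+ k.
Proof.
move=> f_rep xG; elim: k => [|k IHk]; first by rewrite expg0 expr0 (rep1 f_rep).
by rewrite expgS exprS f_rep.2 ?groupX // IHk.
Qed.

Lemma repV f x : is_rep G f -> x \in G -> f x^-1%g = (f x)^-1.
Proof.
move=> f_rep xG; apply: (mulfI (f_rep.1 _ xG)).
by rewrite -f_rep.2 ?groupV // mulgV (rep1 f_rep) divff // f_rep.1.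
Qed.

Lemma rep_exp f k : is_rep G f -> is_rep G (fun x => f x ^+ k).
Proof.
case=> f_neq0 fM; split=> [x xG | x z xG zG]; first exact/expf_neq0/f_neq0.
by rewrite fM // exprMn.
Qed.

Lemma rep_mul_conj f g : is_rep G f -> is_rep G g -> is_rep G (fun x => f x * (g x)^*).
Proof.
case=> f_neq0 fM [g_neq0 gM]; split=> [x xG | x z xG zG].
  by rewrite mulf_neq0 ?f_neq0 // conjC_eq0 g_neq0.
by rewrite fM // gM // rmorphM mulrACA.
Qed.

Lemma rep_ker_eq f g : {in G, f =1 g} -> rep_ker G f = rep_ker G g.
Proof. by move=> fg; apply/setP => x; rewrite !inE; case: (boolP (x \in G)) => //= /fg->. Qed.

Lemma sum_rep f : is_rep G f ->
  \sum_(x in G) f x = if [forall x in G, f x == 1] then #|G|%:R else 0.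
Proof.
move=> f_rep; case: ifP => [/forall_inP f1 | /negbT].
  by rewrite (eq_bigr (fun=> 1)) ?sumr_const // => x /f1/eqP.
rewrite negb_forall_in => /exists_inP[g gG fg_neq1].
have : \sum_(x in G) f x = f g * \sum_(x in G) f x.
  rewrite {1}(reindex_inj (mulgI g)) mulr_sumr /=.
  rewrite (eq_bigl (fun x => x \in G)) => [|x]; last by rewrite groupMl.
  by apply: eq_bigr => x xG; rewrite f_rep.2.
move/eqP; rewrite -subr_eq0 -{1}[\sum_(x in G) f x]mul1r -mulrBl mulf_eq0.
by rewrite subr_eq0 eq_sym (negbTE fg_neq1) => /eqP.
Qed.

Hypothesis abG : abelian G.

Lemma irr_rep (i : Iirr G) : is_rep G 'chi_i.
Proof.
have i_lin := char_abelianP G abG i.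
by split=> [x xG | x z xG zG]; [exact: lin_char_neq0 | exact: lin_charM].
Qed.

Lemma irr_eq_in (i j : Iirr G) : {in G, 'chi_i =1 'chi_j} -> i = j.
Proof.
move=> ij; apply/irr_inj/cfunP => x.
by case: (boolP (x \in G)) => [/ij // | xGn]; rewrite !cfun0.
Qed.

Lemma irr_conj_sum x z : x \in G -> z \in G ->
  \sum_i 'chi[G]_i x * ('chi_i z)^* = #|G|%:R *+ (x == z).
Proof.
move=> xG zG; rewrite second_orthogonality_relation //.
have -> : ('C_G[x] = G)%g by apply/setIidPl; rewrite sub_cent1 (subsetP abG).
by rewrite ((abelian_classP _ abG) z zG) inE.
Qed.

(* Summing f * chi^* over G and over all chi gives |G| by column orthogonality, while
   each inner sum is |G| or 0, and |G| exactly when chi = f on G. *)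
Lemma rep_irr f : is_rep G f -> exists i : Iirr G, {in G, 'chi_i =1 f}.
Proof.
move=> f_rep; case: (boolP [exists i : Iirr G, [forall x in G, 'chi_i x == f x]]).
  by case/existsP=> i /forall_inP fi; exists i => x /fi/eqP.
move=> no_i.
have : \sum_i \sum_(x in G) f x * ('chi[G]_i x)^* = #|G|%:R.
  rewrite exchange_big (eq_bigr (fun x => f x * (#|G|%:R *+ (1%g == x)))) => [|x xG].
    rewrite (bigD1 1%g) ?group1 //= eqxx (rep1 f_rep) mulr1n mul1r big1 ?addr0 //.
    by move=> x /andP[_ /negbTE]; rewrite eq_sym => ->; rewrite mulr0.
  rewrite -irr_conj_sum ?group1 // mulr_sumr; apply: eq_bigr => i _.
  by rewrite lin_char1 ?(char_abelianP G abG) // mul1r.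
rewrite big1 => [/eqP|i _]; first by rewrite eq_sym pnatr_eq0 eqn0Ngt cardG_gt0.
rewrite (sum_rep (rep_mul_conj f_rep (irr_rep i))).
case: ifP => // /forall_inP f_chi; case/negP: no_i; apply/existsP; exists i.
apply/forall_inP => x xG; have /eqP := f_chi x xG.
by rewrite -lin_charV_conj ?(char_abelianP G abG) // (repV (irr_rep i)) // => /divr1_eq ->.
Qed.

Lemma rep_expg f k : is_rep G f -> is_rep G (fun x => f (x ^+ k)%g).
Proof.
case=> f_neq0 fM; split=> [x xG | x z xG zG]; first by rewrite f_neq0 ?groupX.
by rewrite expgMn ?fM ?groupX //; apply: (centsP abG).
Qed.

Lemma sum_rootsX_irr k z : z \in G ->
  \sum_(x in G | (x ^+ k)%g == z) (1 : algC) =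
  \sum_(i | [forall x in G, 'chi[G]_i (x ^+ k)%g == 1]) 'chi_i z.
Proof.
move=> zG; apply: (mulfI (_ : #|G|%:R != 0 :> algC)).
  by rewrite pnatr_eq0 eqn0Ngt cardG_gt0.
rewrite mulr_sumr mulr1 big_mkcondr /=.
rewrite (eq_bigr (fun x => \sum_i 'chi[G]_i z * ('chi_i (x ^+ k)%g)^*)) => [|x xG]; last first.
  by rewrite irr_conj_sum ?groupX // eq_sym; case: eqP.
rewrite exchange_big /= mulr_sumr [RHS]big_mkcond /=; apply: eq_bigr => i _.
rewrite -mulr_sumr -rmorph_sum (sum_rep (rep_expg k (irr_rep i))).
by case: ifP => _; rewrite ?rmorph0 ?rmorph_nat ?mulr0 // mulrC.
Qed.

End Representations.

Lemma hcoef_telescope p m : (1 < p)%N -> (m < p)%N ->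
  \sum_(k < p.-1) (p.-1 - k)%N%:Z * ((m == k)%:R - (m == k.+1)%:R) = p%:R * (m == 0%N)%:R - 1.
Proof.
move=> p_gt1 m_lt; rewrite (eq_bigr _ (fun k _ => mulrBr _ _ _)) sumrB.
rewrite (sum_nat_indicator _ (fun k => (p.-1 - k)%N%:Z)).
case: m m_lt => [|m] m_lt.
  rewrite big1 => [|k _]; last by rewrite mulr0.
  by rewrite subn0 /=; case: p p_gt1 {m_lt} => [|[|q]] //= _; lia.
under eq_bigr do rewrite eqSS.
rewrite (sum_nat_indicator _ (fun k => (p.-1 - k)%N%:Z)) /=.
case: (ltnP m.+1 p.-1); case: (ltnP m p.-1); lia.
Qed.

Section PsiTrivialCharacters.
Variables (p : nat) (gT : finGroupType) (G : {group gT}) (n : nat)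
  (T : 'I_n -> gT -> algC) (y : 'I_n -> gT).
Hypothesis p_pr : prime p.
Hypothesis abG : abelian G.
Hypothesis T_props : forall j,
  [/\ is_rep G (T j), ~ rep_trivial G (T j) & psi_rep_trivial G p (T j)].
Hypothesis T_classes : forall tau, is_rep G tau -> ~ rep_trivial G tau ->
  psi_rep_trivial G p tau -> #|[set j : 'I_n | rep_ker G (T j) == rep_ker G tau]| = 1%N.
Hypothesis y_props : forall j, y j \in G /\ T j (y j) = omega p.

Local Notation w := (omega p).
Let w_prim : p.-primitive_root w := omega_prim_root p_pr.

Lemma T_rep j : is_rep G (T j). Proof. by case: (T_props j). Qed.

Lemma T_exp1 j x : x \in G -> T j x ^+ p = 1.
Proof. by move=> xG; rewrite -(repX _ (T_rep j) xG); case: (T_props j) => _ _; apply. Qed.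

Lemma T_expw j x : x \in G -> {m : 'I_p | T j x = w ^+ m}.
Proof. by move=> xG; apply: prim_rootP w_prim _ (T_exp1 j xG). Qed.

Lemma w_neq0 : w != 0.
Proof. by rewrite (prim_root_eq0 w_prim) -lt0n prime_gt0. Qed.

Lemma w_exp_eq1 (a : 'I_p) : (w ^+ a == 1) = (a == 0%N :> nat).
Proof.
rewrite -(prim_order_dvd w_prim); apply/idP/eqP => [|->]; last exact: dvdn0.
by move/dvdn_leq; case: (nat_of_ord a) (ltn_ord a) => // a' a_lt /(_ isT); rewrite leqNgt a_lt.
Qed.

Lemma rep_ker_Texp j (a : 'I_p) : a != 0%N :> nat ->
  rep_ker G (fun x => T j x ^+ a) = rep_ker G (T j).
Proof.
move=> a_neq0; have a_ndvd : ~~ (p %| a)%N by rewrite (prim_order_dvd w_prim) w_exp_eq1.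
apply/setP => x; rewrite !inE; case: (boolP (x \in G)) => //= xG.
have [m ->] := T_expw j xG.
by rewrite -exprM -!(prim_order_dvd w_prim) Euclid_dvdM // (negbTE a_ndvd) orbF.
Qed.

Lemma T_inj_ker j j' : rep_ker G (T j') = rep_ker G (T j) -> j' = j.
Proof.
move=> kerE; have [j_rep j_ntriv j_psi] := T_props j.
have /cards1P[k Tk] := introT eqP (T_classes j_rep j_ntriv j_psi).
have : j \in [set i | rep_ker G (T i) == rep_ker G (T j)] by rewrite inE.
have : j' \in [set i | rep_ker G (T i) == rep_ker G (T j)] by rewrite inE kerE.
by rewrite Tk !inE => /eqP-> /eqP->.
Qed.

(* Every x in G is y^m times an element of ker (T j) = ker f, so f x = f(y)^m. *)
Lemma rep_ker_eq_Texp f j : is_rep G f -> (forall x, x \in G -> f x ^+ p = 1) ->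
  rep_ker G f = rep_ker G (T j) -> exists a : 'I_p, {in G, f =1 fun x => T j x ^+ a}.
Proof.
move=> f_rep f_exp1 kerE; have [yG Ty] := y_props j.
have [a fy] := prim_rootP w_prim (f_exp1 _ yG).
exists a => x xG; have [m Tx] := T_expw j xG.
have : (x * (y j ^+ m)^-1)%g \in rep_ker G (T j).
  rewrite inE groupM ?groupV ?groupX //= (T_rep j).2 ?groupV ?groupX //.
  by rewrite (repV (T_rep j)) ?groupX // (repX _ (T_rep j)) // Ty Tx mulfV // expf_neq0 ?w_neq0.
rewrite -kerE inE groupM ?groupV ?groupX //= f_rep.2 ?groupV ?groupX //.
rewrite (repV f_rep) ?groupX // (repX _ f_rep) // fy => /eqP/divr1_eq->.
by rewrite Tx exprAC.
Qed.

Definition psi_trivial_irr (i : Iirr G) := [forall x in G, 'chi[G]_i (x ^+ p)%g == 1].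

Definition irr_Texp (i : Iirr G) (ja : 'I_n * 'I_p) :=
  (ja.2 != 0%N :> nat) && [forall x in G, 'chi_i x == T ja.1 x ^+ ja.2].

Lemma irr_Texp_psi_trivial i ja : irr_Texp i ja -> psi_trivial_irr i && (i != 0).
Proof.
case: ja => j a /andP[/= a_neq0 /forall_inP chiE]; have [yG Ty] := y_props j.
apply/andP; split.
  apply/forall_inP => x xG; rewrite (eqP (chiE _ (groupX p xG))).
  by rewrite (repX _ (T_rep j)) // T_exp1 ?expr1n.
apply: contra a_neq0 => /eqP i0; move: (chiE _ yG).
by rewrite i0 irr0 cfun1E yG Ty eq_sym w_exp_eq1.
Qed.

Lemma psi_trivial_irr_Texp i : psi_trivial_irr i -> i != 0 ->
  exists ja, irr_Texp i ja /\ forall ja', irr_Texp i ja' -> ja' = ja.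
Proof.
move=> /forall_inP i_psi i_neq0; have i_rep := irr_rep abG i.
have i_exp1 x : x \in G -> 'chi_i x ^+ p = 1.
  by move=> xG; rewrite -(repX _ i_rep xG); apply/eqP/i_psi.
have i_ntriv : ~ rep_trivial G 'chi_i.
  move=> i_triv; case/eqP: i_neq0; apply: irr_eq_in => x xG.
  by rewrite i_triv // irr0 cfun1E xG.
have /cards1P[j Tj] := introT eqP (T_classes i_rep i_ntriv (fun x xG => eqP (i_psi x xG))).
have : j \in [set k | rep_ker G (T k) == rep_ker G 'chi_i] by rewrite Tj set11.
rewrite inE => /eqP kerE.
have [a chiE] := rep_ker_eq_Texp i_rep i_exp1 (esym kerE).
have a_neq0 : a != 0%N :> nat.
  by apply/eqP => a0; apply: i_ntriv => x xG; rewrite chiE // a0.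
exists (j, a); split=> [|[j' a'] /andP[/= a'_neq0 /forall_inP chiE']].
  by rewrite /irr_Texp a_neq0; apply/forall_inP => x /chiE->.
have chiE'' : {in G, 'chi_i =1 fun x => T j' x ^+ a'} by move=> x /chiE'/eqP.
have jE : j' = j.
  by apply: T_inj_ker; rewrite -(rep_ker_Texp j' a'_neq0) -(rep_ker_eq chiE'') kerE.
have [yG Ty] := y_props j; move: chiE''; rewrite jE => chiE''.
have /eqP : w ^+ a' = w ^+ a by rewrite -Ty -chiE -?chiE''.
rewrite (eq_prim_root_expr w_prim) !modn_small // => /eqP aE.
by congr (_, _); apply: val_inj.
Qed.

Lemma Texp_irr (ja : 'I_n * 'I_p) : ja.2 != 0%N :> nat ->
  exists i, irr_Texp i ja /\ forall i', irr_Texp i' ja -> i' = i.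
Proof.
case: ja => j a /= a_neq0; have [i chiE] := rep_irr abG (rep_exp a (T_rep j)).
exists i; split=> [|i' /andP[_ /forall_inP chiE']].
  by rewrite /irr_Texp a_neq0; apply/forall_inP => x /chiE->.
by apply: irr_eq_in => x xG; rewrite chiE //; apply/eqP/chiE'.
Qed.

Lemma sum_psi_trivial_irr z : z \in G ->
  \sum_(i | psi_trivial_irr i) 'chi[G]_i z = 1 + \sum_j (p%:R * (T j z == 1)%:R - 1).
Proof.
move=> zG; rewrite (bigD1 0) /=; last first.
  by apply/forall_inP => x xG; rewrite irr0 cfun1E groupX.
rewrite irr0 cfun1E zG; congr (_ + _).
have -> : \sum_(i | psi_trivial_irr i && (i != 0)) 'chi_i z =
           \sum_(ja : 'I_n * 'I_p | ja.2 != 0%N :> nat) T ja.1 z ^+ ja.2.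
  apply: (sum_rel_bij (r := irr_Texp)) => [i ja rij | i /andP[] | ja]; last exact: Texp_irr.
    have := irr_Texp_psi_trivial rij.
    by case/andP: rij => ja_neq0 /forall_inP/(_ z zG)/eqP.
  exact: psi_trivial_irr_Texp.
rewrite (eq_bigr (fun j => \sum_(a < p | a != 0%N :> nat) T j z ^+ a)) ?pair_big_dep //.
by move=> j _; rewrite sum_nonzero_expr ?prime_gt0 ?T_exp1.
Qed.

Lemma count_rootsX z : z \in G ->
  \sum_(x in G | (x ^+ p)%g == z) 1 = 1 + \sum_j (p%:R * (T j z == 1)%:R - 1) :> int.
Proof.
move=> zG; apply: (@intr_inj algC); rewrite rmorphD rmorph1 !rmorph_sum /=.
under eq_bigr do rewrite rmorph1.
rewrite sum_rootsX_irr // sum_psi_trivial_irr //; congr (_ + _).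
by apply: eq_bigr => j _; rewrite rmorphB rmorphM !rmorph_nat rmorph1.
Qed.

Lemma b_rep_translate j z (m : 'I_p) k : z \in G -> T j z = w ^+ m -> (k < p.-1)%N ->
  b_rep G p (T j) ((y j ^+ k)^-1 * z)%g = (m == k :> nat)%:R - (m == k.+1 :> nat)%:R.
Proof.
move=> zG Tz k_lt; have [yG Ty] := y_props j; have wk_neq0 := expf_neq0 k w_neq0.
have wE c : (c + k < p)%N -> (w ^+ m / w ^+ k == w ^+ c) = (m == c + k :> nat).
  move=> ck_lt; rewrite (can2_eq (divfK wk_neq0) (mulfK wk_neq0)) -exprD.
  by rewrite (eq_prim_root_expr w_prim) !modn_small.
rewrite ffunE groupM ?groupV ?groupX //= (T_rep j).2 ?groupV ?groupX //.
rewrite (repV (T_rep j)) ?groupX // (repX _ (T_rep j)) // Ty Tz mulrC.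
have [w0E w1E] := (wE 0%N, wE 1%N); rewrite expr0 expr1 add0n add1n in w0E w1E.
by rewrite w0E ?w1E -?natz //; lia.
Qed.

Lemma conv_hpoly_b_rep j z : z \in G ->
  gr_mul G (gr_peval (hpoly p) (y j)) (b_rep G p (T j)) z = p%:R * (T j z == 1)%:R - 1.
Proof.
move=> zG; have [yG _] := y_props j; have p_gt1 := prime_gt1 p_pr.
have [m Tz] := T_expw j zG.
rewrite gr_mul_pevalE // hpolyE // size_poly_eq; last by apply/eqP; lia.
under eq_bigr => k _ do rewrite coef_poly ltn_ord (b_rep_translate zG Tz) //.
by rewrite hcoef_telescope // Tz w_exp_eq1.
Qed.

End PsiTrivialCharacters.

Theorem mainTheorem6 (p e : nat) (gT : finGroupType) (G : {group gT})
  (n : nat) (T : 'I_n -> gT -> algC) (y : 'I_n -> gT) :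
  prime p -> (0 < e)%N -> abelian G -> #|G| = (p ^ e)%N ->
  (forall i, [/\ is_rep G (T i), ~ rep_trivial G (T i) & psi_rep_trivial G p (T i)]) ->
  (forall tau, is_rep G tau -> ~ rep_trivial G tau -> psi_rep_trivial G p tau ->
     #|[set i : 'I_n | rep_ker G (T i) == rep_ker G tau]| = 1%N) ->
  (forall i, y i \in G /\ T i (y i) = omega p) ->
  gr_psi G p (b1 G) =
    b1 G + \sum_(i < n) gr_mul G (gr_peval (hpoly p) (y i)) (b_rep G p (T i)).
Proof.
move=> p_pr _ abG _ T_props T_classes y_props; apply/ffunP => z.
rewrite gr_psi_b1E !ffunE sum_ffunE; have [zG | zGn] := boolP (z \in G).
  rewrite (count_rootsX p_pr abG T_props T_classes y_props zG); congr (_ + _).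
  by apply: eq_bigr => j _; rewrite (conv_hpoly_b_rep p_pr abG T_props y_props).
rewrite big_pred0 => [|x]; last first.
  by apply: contraNF zGn => /andP[xG /eqP <-]; rewrite groupX.
rewrite add0r big1 // => j _; apply: gr_mul_out => // x xGn.
by rewrite ffunE (negbTE xGn).
Qed.
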